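(* Let $\{\alpha_k^i\}$ and $\{\tilde\alpha_k^i\}$, $i=1,\dots,n$, be the sequences produced by Algorithm DFL (defined in the context) with fixed $\epsilon>0$. Then $\lim_{k\to\infty}\alpha_k^i=0$ and $\lim_{k\to\infty}\tilde\alpha_k^i=0$ for every $i=1,\dots,n$.
   Context: Problem data: $f:\mathbb{R}^n\to\mathbb{R}$, $g:\mathbb{R}^n\to\mathbb{R}^m$, $h:\mathbb{R}^n\to\mathbb{R}^q$ continuously differentiable; $l,u\in\mathbb{R}^n$ with $l<u$; $X=\{x: l\le x\le u\}$; $S_<=\{x: g(x)<0\}$; there is $x_0\in X\cap S_<$. Fix $\nu>1$. For $\epsilon>0$, $P(x;\epsilon)=f(x)-\epsilon\sum_{j=1}^m\log(-g_j(x))+\frac1\epsilon\sum_{j=1}^q|h_j(x)|^\nu$ if $x\in S_<$, and $P(x;\epsilon)=+\infty$ otherwise. $e^i$ is the $i$-th unit coordinate vector. Expansion Step$(\hat\alpha,y,p,\gamma)$ with parameter $\delta\in(0,1)$ (using the current $\epsilon$): let $b$ be the largest $\beta\ge0$ with $y+\beta p\in X$; set $\alpha\leftarrow\hat\alpha$; repeat: $\check\alpha\leftarrow\min\{b,\alpha/\delta\}$; if $y+\check\alpha p\notin S_<$ return $\alpha$; else if $P(y+\check\alpha p;\epsilon)\le P(y;\epsilon)-\gamma\check\alpha^2$ set $\alpha\leftarrow\check\alpha$ and return if $\check\alpha=b$, else repeat; otherwise return $\alpha$. Algorithm DFL (parameters $\epsilon>0,\gamma>0,\theta\in(0,1),\delta\in(0,1)$,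 $\tilde\alpha_0^i>0$, $d_0^i=e^i$): for $k=0,1,\dots$: set $y_k^1=x_k$. For $i=1,\dots,n$: (a) choose $\hat\alpha\in[0,\tilde\alpha_k^i]$ with $y_k^i+\hat\alpha d_k^i\in S_<\cap X$; if $\hat\alpha>0$ and $P(y_k^i+\hat\alpha d_k^i;\epsilon)\le P(y_k^i;\epsilon)-\gamma\hat\alpha^2$, let $\alpha_k^i$ be the output of the Expansion Step$(\hat\alpha,y_k^i,d_k^i,\gamma)$ and set $\tilde\alpha_{k+1}^i=\alpha_k^i$, $d_{k+1}^i=d_k^i$; (b) otherwise do the same with $-d_k^i$ in place of $d_k^i$, and on success set $\tilde\alpha_{k+1}^i=\alpha_k^i$, $d_{k+1}^i=-d_k^i$; (c) if neither succeeds set $\alpha_k^i=0$, $d_{k+1}^i=d_k^i$, $\tilde\alpha_{k+1}^i=\theta\tilde\alpha_k^i$. Then $y_k^{i+1}=y_k^i+\alpha_k^i d_{k+1}^i$. Finally choose any $x_{k+1}\in S_<\cap X$ with $P(x_{k+1};\epsilon)\le P(y_k^{n+1};\epsilon)$. *)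

From HB Require Import structures.
From mathcomp Require Import all_boot all_order all_algebra.
From mathcomp Require Import all_classical all_reals all_analysis.
Import Order.TTheory GRing.Theory Num.Theory.
Import numFieldNormedType.Exports.
Local Open Scope ring_scope.

Set Implicit Arguments.
Unset Strict Implicit.
Unset Printing Implicit Defensive.

Section DFLDefs.
Variable R : realType.

Definition C1 (V W : normedModType R) (F : V -> W) : Prop :=
  (forall x, differentiable F x) /\ (forall v : V, continuous (fun x => 'd F x v)).

Variables n m q : nat.

Definition inX (l u x : 'rV[R]_n) : bool :=
  [forall i, (l 0 i <= x 0 i) && (x 0 i <= u 0 i)].

Definition inS (g : 'rV[R]_n -> 'rV[R]_m) (x : 'rV[R]_n) : bool :=
  [forall j, g x 0 j < 0].

Definition Pen (f : 'rV[R]_n -> R) (g : 'rV[R]_n -> 'rV[R]_m)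
  (h : 'rV[R]_n -> 'rV[R]_q) (nu eps : R) (x : 'rV[R]_n) : \bar R :=
  if inS g x then
    (f x - eps * (\sum_(j < m) ln (- g x 0 j))
         + eps^-1 * (\sum_(j < q) powR `|h x 0 j| nu))%:E
  else +oo%E.

Definition unitv (i : 'I_n) : 'rV[R]_n := delta_mx 0 i.

Definition is_max_step (l u y p : 'rV[R]_n) (b : R) : Prop :=
  0 <= b /\ inX l u (y + b *: p) /\
  (forall beta, 0 <= beta -> inX l u (y + beta *: p) -> beta <= b).

Definition suff_decr (Pf : 'rV[R]_n -> \bar R) (y p : 'rV[R]_n) (gamma a : R) : Prop :=
  (Pf (y + a *: p)%R <= Pf y - (gamma * a ^+ 2)%R%:E)%E.

(* The repeat loop of the Expansion Step, with b fixed: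
   expansion a out  means: starting the loop with current alpha = a, the
   returned value is out. *)
Inductive expansion (Pf : 'rV[R]_n -> \bar R) (g : 'rV[R]_n -> 'rV[R]_m)
    (delta gamma b : R) (y p : 'rV[R]_n) : R -> R -> Prop :=
| exp_infeasible a :
    ~~ inS g (y + Num.min b (a / delta) *: p) ->
    expansion Pf g delta gamma b y p a a
| exp_stop_bound a :
    inS g (y + Num.min b (a / delta) *: p) ->
    suff_decr Pf y p gamma (Num.min b (a / delta)) ->
    Num.min b (a / delta) = b ->
    expansion Pf g delta gamma b y p a (Num.min b (a / delta))
| exp_continue a out :
    inS g (y + Num.min b (a / delta) *: p) ->
    suff_decr Pf y p gamma (Num.min b (a / delta)) ->
    Num.min b (a / delta) <> b ->
    expansion Pf g delta gamma b y p (Num.min b (a / delta)) out ->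
    expansion Pf g delta gamma b y p a out
| exp_fail a :
    inS g (y + Num.min b (a / delta) *: p) ->
    ~ suff_decr Pf y p gamma (Num.min b (a / delta)) ->
    expansion Pf g delta gamma b y p a a.

Definition expansion_step (Pf : 'rV[R]_n -> \bar R) (g : 'rV[R]_n -> 'rV[R]_m)
    (l u : 'rV[R]_n) (delta gamma ahat : R) (y p : 'rV[R]_n) (alpha : R) : Prop :=
  exists b, is_max_step l u y p b /\ expansion Pf g delta gamma b y p ahat alpha.

(* One inner iteration (index i) of DFL at outer iteration k:
   from y = y_k^i, p = d_k^i, at = tilde alpha_k^i, produces
   alpha = alpha_k^i, ta' = tilde alpha_{k+1}^i, p' = d_{k+1}^i. *)
Definition DFL_inner (Pf : 'rV[R]_n -> \bar R) (g : 'rV[R]_n -> 'rV[R]_m)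
    (l u : 'rV[R]_n) (gamma theta delta : R) (y p : 'rV[R]_n) (ta : R)
    (alpha ta' : R) (p' : 'rV[R]_n) : Prop :=
  exists a1, 0 <= a1 <= ta /\ inS g (y + a1 *: p) /\ inX l u (y + a1 *: p) /\
   ((0 < a1 /\ suff_decr Pf y p gamma a1 /\
       expansion_step Pf g l u delta gamma a1 y p alpha /\ ta' = alpha /\ p' = p)
    \/
    (~ (0 < a1 /\ suff_decr Pf y p gamma a1) /\
     exists a2, 0 <= a2 <= ta /\ inS g (y + a2 *: (- p)) /\ inX l u (y + a2 *: (- p)) /\
      ((0 < a2 /\ suff_decr Pf y (- p) gamma a2 /\
          expansion_step Pf g l u delta gamma a2 y (- p) alpha /\ ta' = alpha /\ p' = - p)
       \/
       (~ (0 < a2 /\ suff_decr Pf y (- p) gamma a2) /\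
          alpha = 0 /\ p' = p /\ ta' = theta * ta)))).

(* x, y, alpha, atil, d are the sequences x_k, y_k^i (i = 0..n, i.e. y_k^{i+1}),
   alpha_k^i, tilde alpha_k^i, d_k^i (i : 'I_n, i.e. indices 1..n shifted by one)
   produced by Algorithm DFL started at x0 with parameters eps, gamma, theta,
   delta and initial steps atil0. *)
Definition DFL_run (f : 'rV[R]_n -> R) (g : 'rV[R]_n -> 'rV[R]_m)
    (h : 'rV[R]_n -> 'rV[R]_q) (l u : 'rV[R]_n) (nu eps gamma theta delta : R)
    (x0 : 'rV[R]_n) (atil0 : 'I_n -> R)
    (x : nat -> 'rV[R]_n) (y : nat -> nat -> 'rV[R]_n)
    (alpha atil : nat -> 'I_n -> R) (d : nat -> 'I_n -> 'rV[R]_n) : Prop :=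
  let Pf := Pen f g h nu eps in
  x 0%N = x0 /\
  (forall i, atil 0%N i = atil0 i) /\
  (forall i, d 0%N i = unitv i) /\
  forall k : nat,
    y k 0%N = x k /\
    (forall i : 'I_n,
       DFL_inner Pf g l u gamma theta delta (y k i) (d k i) (atil k i)
         (alpha k i) (atil k.+1 i) (d k.+1 i) /\
       y k i.+1 = y k i + alpha k i *: d k.+1 i) /\
    inS g (x k.+1) /\ inX l u (x k.+1) /\
    (Pf (x k.+1) <= Pf (y k n))%E.

End DFLDefs.

From mathcomp Require Import all_boot all_order all_algebra.
From mathcomp Require Import all_classical all_reals all_analysis.
From mathcomp Require Import lra.
Import Order.TTheory GRing.Theory Num.Theory.
Import numFieldNormedType.Exports.
Local Open Scope classical_set_scope.
Local Open Scope ring_scope.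

Set Implicit Arguments.
Unset Strict Implicit.
Unset Printing Implicit Defensive.

(* Every accepted step of the
   inner sweep decreases the penalty-barrier function P(.; eps) by at least
   gamma alpha^2 (the Expansion Step only enlarges a step while the decrease
   test holds), so P(x_{k+1}) <= P(x_k) - gamma (alpha_k^i)^2.  On the compact
   box X the function f and the constraints g are bounded below, hence P is
   bounded below on S_< /\ X; a nonincreasing bounded sequence converges, and
   its gaps bound gamma (alpha_k^i)^2, so alpha_k^i -> 0.  Finally
   tilde alpha_{k+1}^i is either alpha_k^i or theta tilde alpha_k^i, and such a
   sequence is squeezed to 0 once the alpha's are small. *)

Lemma nonincreasing_prefix (disp : Order.disp_t) (T : porderType disp)
    (s : nat -> T) (N : nat) :
  (forall j, (j < N)%N -> (s j.+1 <= s j)%O) ->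
  forall a b, (a <= b <= N)%N -> (s b <= s a)%O.
Proof.
move=> step a b /andP[ab bN].
have aN : (a <= N)%N by exact: leq_trans ab bN.
apply: (@homo_leq_in _ [pred j | (j <= N)%N] s (fun x y => (y <= x)%O)) => //.
- by move=> y x z yx zy; exact: le_trans zy yx.
- move=> i j _ jN k /andP[_ /ltnW kj]; exact: leq_trans kj jN.
- by move=> j _ /= jN; exact: step.
Qed.

Section SequenceFacts.
Variable R : realType.

Lemma vanishing_steps (p a : R ^nat) (gamma M : R) :
  0 < gamma -> (forall k, M <= p k) ->
  (forall k, p k.+1 <= p k - gamma * a k ^+ 2) ->
  a @ \oo --> 0.
Proof.
move=> gamma0 p_lb p_decr.
have p_noninc : forall k, p k.+1 <= p k.
  by move=> k; have := p_decr k; have := sqr_ge0 (a k); nra.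
have p_cvg : cvgn p.
  apply: nonincreasing_is_cvgn; first exact/nonincreasing_seqP.
  by exists M => _ [k _ <-].
have gaps0 : (fun k => p k - p k.+1) @ \oo --> 0.
  rewrite -(subrr (limn p)); apply: cvgB => //.
  by rewrite (cvg_shiftS p).
apply/cvgrPdist_lt => e e0.
have ge0 : 0 < gamma * e ^+ 2 by rewrite mulr_gt0 // exprn_gt0.
apply: filterS ((cvgrPdist_lt _ _).1 gaps0 _ ge0) => k.
rewrite !sub0r !normrN => gap_small.
have sq_small : a k ^+ 2 < e ^+ 2.
  rewrite -(ltr_pM2l gamma0); have := p_decr k.
  by have := ler_norm (p k - p k.+1); lra.
rewrite -(ltr_pXn2r (_ : 0 < 2)%N) ?nnegrE ?(ltW e0) //.
by rewrite real_normK ?num_real.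
Qed.

Lemma contraction_bound (t : R ^nat) (theta c : R) (N : nat) :
  0 <= theta <= 1 -> 0 <= c ->
  (forall k, (N <= k)%N -> `|t k.+1| <= c \/ `|t k.+1| <= theta * `|t k|) ->
  forall j, `|t (N + j)%N| <= c + theta ^+ j * `|t N|.
Proof.
move=> /andP[theta0 theta1] c0 step; elim=> [|j IH].
  by rewrite addn0 expr0 mul1r lerDr.
have geom0 : 0 <= theta ^+ j.+1 * `|t N| by rewrite mulr_ge0 ?exprn_ge0.
rewrite addnS; case: (step (N + j)%N (leq_addr _ _)) => [small|contracted].
  by apply: le_trans small _; rewrite lerDl.
apply: le_trans contracted _.
have : theta * `|t (N + j)%N| <= theta * (c + theta ^+ j * `|t N|).
  exact: ler_wpM2l.
have : theta * c <= c by rewrite ler_piMl.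
by rewrite exprS -mulrA mulrDr; lra.
Qed.

Lemma step_sizes_vanish (t a : R ^nat) (theta : R) :
  0 <= theta < 1 -> a @ \oo --> 0 ->
  (forall k, t k.+1 = a k \/ t k.+1 = theta * t k) ->
  t @ \oo --> 0.
Proof.
move=> /andP[theta0 theta1] a0 update.
apply/cvgrPdist_le => e e0.
have e20 : 0 < e / 2 by rewrite divr_gt0.
have [N _ a_small] := (cvgrPdist_le _ _).1 a0 _ e20.
have step k : (N <= k)%N ->
    `|t k.+1| <= e / 2 \/ `|t k.+1| <= theta * `|t k|.
  move=> Nk; case: (update k) => ->; [left|right].
    by have := a_small k Nk; rewrite /= sub0r normrN.
  by rewrite normrM ger0_norm.
have theta01 : 0 <= theta <= 1 by rewrite theta0 ltW.
have bound := contraction_bound theta01 (ltW e20) step.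
have geom_cvg : geometric `|t N| theta @ \oo --> 0.
  by apply: cvg_geometric; rewrite ger0_norm.
have [J _ geom_small] := (cvgrPdist_le _ _).1 geom_cvg _ e20.
exists (N + J)%N => // k /= NJk.
rewrite sub0r normrN -(subnKC (leq_trans (leq_addr J N) NJk)).
apply: le_trans (bound _) _.
have : (J <= k - N)%N by rewrite leq_subRL ?(leq_trans (leq_addr J N)) // addnC.
move=> /geom_small; rewrite /= sub0r normrN /geometric mulrC ger0_norm.
  lra.
by rewrite mulr_ge0 ?exprn_ge0.
Qed.
End SequenceFacts.

Lemma C1_continuous (R : realType) (V W : normedModType R) (F : V -> W) :
  C1 F -> continuous F.
Proof. by move=> [dF _] x; exact: differentiable_continuous. Qed.

Section BoxAndPenalty.
Variables (R : realType) (n m q : nat).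

Lemma box_compact (l u : 'rV[R]_n) : compact [set x | inX l u x].
Proof.
have -> : [set x | inX l u x] =
    [set v : 'rV[R]_n | forall i, `[l 0 i, u 0 i]%classic (v ord0 i)].
  apply/seteqP; split => v /=.
    by move=> /forallP box i; rewrite /= in_itv; exact: box.
  by move=> box; apply/forallP => i; have := box i; rewrite /= in_itv.
apply: (@rV_compact _ _ (fun i => `[l 0 i, u 0 i]%classic)) => i.
exact: segment_compact.
Qed.

Lemma box_lower_bound (l u x0 : 'rV[R]_n) (phi : 'rV[R]_n -> R) :
  continuous phi -> inX l u x0 ->
  exists M, forall x, inX l u x -> M <= phi x.
Proof.
move=> phi_cont X0.
have [c _ c_min] := @EVT_min_rV R n phi [set x | inX l u x]
  (ex_intro _ x0 X0) (@box_compact l u) (continuous_subspaceT phi_cont).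
by exists (phi c) => x Xx; apply: c_min; rewrite inE.
Qed.

(* P(.; eps) is bounded below on S_< /\ X: f is bounded below on X, the
   barrier term is bounded via ln z <= z - 1 and the lower bounds of g, and the
   penalty term is nonnegative. *)
Lemma pen_lower_bound (f : 'rV[R]_n -> R) (g : 'rV[R]_n -> 'rV[R]_m)
    (h : 'rV[R]_n -> 'rV[R]_q) (l u x0 : 'rV[R]_n) (nu eps : R) :
  continuous f -> continuous g -> 0 < eps -> inX l u x0 ->
  exists M, forall x, inS g x -> inX l u x -> (M%:E <= Pen f g h nu eps x)%E.
Proof.
move=> f_cont g_cont eps0 X0.
have [Fmin f_lb] := box_lower_bound f_cont X0.
have g_lb (j : 'I_m) : exists G, forall x, inX l u x -> G <= g x 0 j.
  apply: (box_lower_bound _ X0) => x.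
  apply: (@continuous_comp _ _ _ g (fun M : 'rV[R]_m => M 0 j)).
    exact: g_cont.
  exact: coord_continuous.
have [G G_lb] := choice g_lb.
exists (Fmin - eps * \sum_(j < m) - G j) => x Sx Xx; rewrite /Pen Sx lee_fin.
have barrier_ub : \sum_(j < m) ln (- g x 0 j) <= \sum_(j < m) - G j.
  apply: ler_sum => j _.
  have gj_neg : 0 < - g x 0 j by rewrite oppr_gt0; move/forallP: Sx; exact.
  by apply: le_trans (ltW (ln_sublinear gj_neg)) _; rewrite lerN2 G_lb.
have penalty_ge0 : 0 <= eps^-1 * \sum_(j < q) powR `|h x 0 j| nu.
  apply: mulr_ge0; first by rewrite invr_ge0 ltW.
  by apply: sumr_ge0 => j _; exact: powR_ge0.
have := f_lb x Xx; have : eps * \sum_(j < m) ln (- g x 0 j) <=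
  eps * \sum_(j < m) - G j by rewrite ler_pM2l.
lra.
Qed.
End BoxAndPenalty.

Section DFLIterations.
Variables (R : realType) (n m : nat).
Variables (Pf : 'rV[R]_n -> \bar R) (g : 'rV[R]_n -> 'rV[R]_m).

(* The Expansion Step only accepts steps passing the decrease test, so its
   output satisfies the test whenever its input does. *)
Lemma expansion_suff_decr (delta gamma b : R) (y p : 'rV[R]_n) (a out : R) :
  expansion Pf g delta gamma b y p a out ->
  suff_decr Pf y p gamma a -> suff_decr Pf y p gamma out.
Proof. by elim=> // a' out' _ decr' _ _ IH _; exact: IH. Qed.

Lemma DFL_inner_outcome (l u : 'rV[R]_n) (gamma theta delta : R)
    (y p : 'rV[R]_n) (ta alpha ta' : R) (p' : 'rV[R]_n) :
  DFL_inner Pf g l u gamma theta delta y p ta alpha ta' p' ->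
  (Pf (y + alpha *: p') <= Pf y - (gamma * alpha ^+ 2)%:E)%E /\
  (ta' = alpha \/ ta' = theta * ta).
Proof.
case=> a1 [_ [_ [_ [[_ [decr1 [[b [_ exp1]] [-> ->]]]] | [_ [a2 [_ [_ [_
  [[_ [decr2 [[b [_ exp2]] [-> ->]]]] | [_ [-> [-> ->]]]]]]]]]]]]].
- by split; [exact: expansion_suff_decr exp1 decr1 | left].
- by split; [exact: expansion_suff_decr exp2 decr2 | left].
- by split; [rewrite scale0r addr0 expr0n /= mulr0 sube0 | right].
Qed.
End DFLIterations.

Section DFLRun.
Variables (R : realType) (n m q : nat).
Variables (f : 'rV[R]_n -> R) (g : 'rV[R]_n -> 'rV[R]_m)
  (h : 'rV[R]_n -> 'rV[R]_q).
Variables (l u x0 : 'rV[R]_n) (nu eps gamma theta delta : R) (atil0 : 'I_n -> R).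
Variables (x : nat -> 'rV[R]_n) (y : nat -> nat -> 'rV[R]_n)
  (alpha atil : nat -> 'I_n -> R) (d : nat -> 'I_n -> 'rV[R]_n).
Hypothesis run : DFL_run f g h l u nu eps gamma theta delta x0 atil0 x y alpha atil d.

Hypotheses (X0 : inX l u x0) (S0 : inS g x0) (gamma0 : 0 <= gamma).

Let Pf := Pen f g h nu eps.

Lemma DFL_run_feasible k : inS g (x k) /\ inX l u (x k).
Proof.
have [x_0 [_ [_ iter]]] := run; case: k => [|k]; first by rewrite x_0.
by have [_ [_ [Sx [Xx _]]]] := iter k.
Qed.

Lemma DFL_run_step_update k (i : 'I_n) :
  atil k.+1 i = alpha k i \/ atil k.+1 i = theta * atil k i.
Proof.
have [_ [_ [_ iter]]] := run; have [_ [sweep _]] := iter k.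
exact: (DFL_inner_outcome (sweep i).1).2.
Qed.

Lemma DFL_run_sweep_decrease k (i : 'I_n) :
  (Pf (y k i.+1) <= Pf (y k i) - (gamma * alpha k i ^+ 2)%:E)%E.
Proof.
have [_ [_ [_ iter]]] := run; have [_ [sweep _]] := iter k.
by have [inner ->] := sweep i; exact: (DFL_inner_outcome inner).1.
Qed.

Lemma DFL_run_merit_decrease k (i : 'I_n) :
  (Pf (x k.+1) <= Pf (x k) - (gamma * alpha k i ^+ 2)%:E)%E.
Proof.
have [_ [_ [_ iter]]] := run; have [y_0 [_ [_ [_ last_le]]]] := iter k.
have sweep_noninc j : (j < n)%N -> (Pf (y k j.+1) <= Pf (y k j))%E.
  move=> jn; apply: le_trans (DFL_run_sweep_decrease k (Ordinal jn)) _.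
  by rewrite leeBlDr // leeDl // lee_fin mulr_ge0 ?sqr_ge0.
have after_i : (Pf (y k n) <= Pf (y k i.+1))%E.
  by apply: nonincreasing_prefix sweep_noninc _ _ _; rewrite leqnn ltn_ord.
have before_i : (Pf (y k i) <= Pf (x k))%E.
  rewrite -y_0; apply: nonincreasing_prefix sweep_noninc _ _ _.
  by rewrite leq0n ltnW.
apply: le_trans last_le (le_trans after_i _).
apply: le_trans (DFL_run_sweep_decrease k i) _.
exact: leeB.
Qed.

End DFLRun.

Theorem proposition3p2 (R : realType) (n m q : nat)
  (f : 'rV[R]_n -> R) (g : 'rV[R]_n -> 'rV[R]_m) (h : 'rV[R]_n -> 'rV[R]_q)
  (l u x0 : 'rV[R]_n) (nu eps gamma theta delta : R) (atil0 : 'I_n -> R) :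
  C1 f -> C1 g -> C1 h ->
  (forall i, l 0 i < u 0 i) ->
  inX l u x0 -> inS g x0 ->
  1 < nu -> 0 < eps -> 0 < gamma ->
  0 < theta < 1 -> 0 < delta < 1 ->
  (forall i, 0 < atil0 i) ->
  forall (x : nat -> 'rV[R]_n) (y : nat -> nat -> 'rV[R]_n)
         (alpha atil : nat -> 'I_n -> R) (d : nat -> 'I_n -> 'rV[R]_n),
  DFL_run f g h l u nu eps gamma theta delta x0 atil0 x y alpha atil d ->
  forall i : 'I_n,
    (fun k => alpha k i) @ \oo --> (0 : R) /\
    (fun k => atil k i) @ \oo --> (0 : R).
Proof.
move=> C1f C1g _ _ X0 S0 _ eps0 gamma0 /andP[theta0 theta1] _ _
  x y alpha atil d run i.
pose merit k := fine (Pen f g h nu eps (x k)).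
have merit_finite k : Pen f g h nu eps (x k) = (merit k)%:E.
  by rewrite /merit /Pen (DFL_run_feasible run X0 S0 k).1.
have [M pen_lb] :=
  pen_lower_bound h nu (C1_continuous C1f) (C1_continuous C1g) eps0 X0.
have merit_lb k : M <= merit k.
  have [Sx Xx] := DFL_run_feasible run X0 S0 k.
  by rewrite -lee_fin -merit_finite; exact: pen_lb.
have merit_decr k : merit k.+1 <= merit k - gamma * alpha k i ^+ 2.
  rewrite -lee_fin EFinB -!merit_finite.
  exact: (DFL_run_merit_decrease run (ltW gamma0)).
have alpha_vanish := vanishing_steps gamma0 merit_lb merit_decr.
have theta01 : 0 <= theta < 1 by rewrite ltW.
split=> //; apply: step_sizes_vanish theta01 alpha_vanish _.
by move=> k; exact: DFL_run_step_update run k i.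
Qed.
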